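(* Let $\beta\in C^0[0,1]$ with $\bar\beta=\|\beta\|_\infty$, let $k=\mathcal{K}(\beta)$ be the exact backstepping kernel, and let $\hat k\in C^0[0,1]$ satisfy $|k(x)-\hat k(x)|<\epsilon$ for all $x\in[0,1]$. Then the kernel $\hat l$ of the inverse of the transformation $\hat w(x)=u(x)-\int_0^x\hat k(x-y)u(y)\,dy$, namely the function with $u(x)=\hat w(x)+\int_0^x\hat l(x-y)\hat w(y)\,dy$, satisfies for all $x\in[0,1]$ $$|\hat l(x)|\le\big(\bar\beta+(1+\bar\beta)\epsilon\big)e^{(1+\bar\beta)\epsilon x}.$$
   Context: The backstepping kernel operator $\mathcal{K}$ maps $\beta\in C^0[0,1]$ to the solution $k$ of $k(x)=-\beta(x)+\int_0^x\beta(x-y)k(y)\,dy$, $x\in[0,1]$. $\|\cdot\|_\infty$ is the supremum norm on $[0,1]$. *)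

From Stdlib Require Import Reals.
From Coquelicot Require Import Coquelicot.
Open Scope R_scope.

Definition cont01 (f : R -> R) : Prop :=
  forall x, 0 <= x <= 1 ->
  forall eps, 0 < eps -> exists delta, 0 < delta /\
    forall y, 0 <= y <= 1 -> Rabs (y - x) < delta -> Rabs (f y - f x) < eps.

Definition is_supnorm01 (f : R -> R) (bb : R) : Prop :=
  (forall x, 0 <= x <= 1 -> Rabs (f x) <= bb) /\
  (forall M, (forall x, 0 <= x <= 1 -> Rabs (f x) <= M) -> bb <= M).

Definition conv (a b : R -> R) (x : R) : R :=
  RInt (fun y => a (x - y) * b y) 0 x.

(* k solves the backstepping kernel equation, i.e. k = K(beta):
   k(x) = -beta(x) + int_0^x beta(x-y) k(y) dy on [0,1]. *)
Definition is_kernel_of (beta k : R -> R) : Prop :=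
  cont01 k /\ forall x, 0 <= x <= 1 -> k x = - beta x + conv beta k x.

Definition is_inverse_kernel (kh lh : R -> R) : Prop :=
  cont01 lh /\
  forall u : R -> R, cont01 u ->
    let w := fun x => u x - conv kh u x in
    forall x, 0 <= x <= 1 -> u x = w x + conv lh w x.

From Stdlib Require Import Reals Lra.
From Coquelicot Require Import Coquelicot.
Open Scope R_scope.

(* Convolution on [0, x] only sees values on [0, 1], so all kernels may be
   replaced by their continuous extensions to R (constant outside [0, 1]); for
   continuous functions convolution is bilinear, commutative and associative
   (Fubini on a triangle).  The inverse-kernel property for u = 1 gives, after
   one convolution with 1 is cancelled, the resolvent identity
   l = kh + l * kh.  With d = k - kh and g = d - beta * d, the kernel equation
   k = -beta + beta * k turns it into l = -beta - g - g * l, and |g| <= (1 + bb) eps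
   since |d| < eps.  Gronwall's inequality for |l| then yields the bound. *)

Lemma continuity_pt_intro (f : R -> R) x :
  (forall eps, 0 < eps -> exists d, 0 < d /\
     forall y, Rabs (y - x) < d -> Rabs (f y - f x) < eps) ->
  continuity_pt f x.
Proof.
  intros H eps Heps. destruct (H eps Heps) as [d [Hd Hy]].
  exists d. split; [exact Hd|]. intros y [_ Hyx]. now apply Hy.
Qed.

Definition continuity_2d (g : R -> R -> R) : Prop :=
  forall x y, continuity_2d_pt g x y.

Lemma continuity_pt_comp_2d (g : R -> R -> R) (p q : R -> R) x :
  continuity_2d_pt g (p x) (q x) -> continuity_pt p x -> continuity_pt q x ->
  continuity_pt (fun t => g (p t) (q t)) x.
Proof.
  intros Hg Hp Hq. apply continuity_pt_filterlim.
  apply (continuous_comp_2 p q g); try now apply continuity_pt_filterlim.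
  now apply continuity_2d_pt_filterlim.
Qed.

Lemma continuity_2d_pt_comp2 (g p q : R -> R -> R) x y :
  continuity_2d_pt g (p x y) (q x y) -> continuity_2d_pt p x y ->
  continuity_2d_pt q x y ->
  continuity_2d_pt (fun u v => g (p u v) (q u v)) x y.
Proof.
  rewrite !continuity_2d_pt_filterlim. intros Hg Hp Hq.
  exact (continuous_comp_2 (fun z => p (fst z) (snd z))
           (fun z => q (fst z) (snd z)) g (x, y) Hp Hq Hg).
Qed.

Ltac continuity_step :=
  match goal with
  | |- continuity _ => intros ?
  | |- continuity_2d _ => intros ? ?
  | H : continuity ?f |- continuity_pt ?f _ => apply H
  | H : continuity_2d ?g |- continuity_2d_pt ?g _ _ => apply H
  | |- continuity_pt (fun _ => _) _ =>
      apply continuity_pt_const; intros ? ?; reflexivity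
  | |- continuity_pt (fun t => t) _ => apply continuity_pt_id
  | |- continuity_pt (fun t => @?f t + @?g t) _ => apply (continuity_pt_plus f g)
  | |- continuity_pt (fun t => @?f t - @?g t) _ => apply (continuity_pt_minus f g)
  | |- continuity_pt (fun t => @?f t * @?g t) _ => apply (continuity_pt_mult f g)
  | |- continuity_pt (fun t => Rabs (@?f t)) _ =>
      apply (continuity_pt_comp f Rabs); [|apply Rcontinuity_abs]
  | H : continuity ?F |- continuity_pt (fun t => ?F (@?p t)) _ =>
      apply (continuity_pt_comp p F); [|apply H]
  | H : continuity_2d ?G |- continuity_pt (?G ?a) _ =>
      apply (continuity_pt_comp_2d G (fun _ => a) (fun t => t)); [apply H| |]
  | H : continuity_2d ?G |- continuity_pt (fun t => ?G (@?p t) (@?q t)) _ =>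
      apply (continuity_pt_comp_2d G p q); [apply H| |]
  | |- continuity_2d_pt (fun _ _ => _) _ _ => apply continuity_2d_pt_const
  | |- continuity_2d_pt (fun u _ => u) _ _ => apply continuity_2d_pt_id1
  | |- continuity_2d_pt (fun _ v => v) _ _ => apply continuity_2d_pt_id2
  | |- continuity_2d_pt (fun u v => @?f u v + @?g u v) _ _ =>
      apply (continuity_2d_pt_plus f g)
  | |- continuity_2d_pt (fun u v => @?f u v - @?g u v) _ _ =>
      apply (continuity_2d_pt_minus f g)
  | |- continuity_2d_pt (fun u v => @?f u v * @?g u v) _ _ =>
      apply (continuity_2d_pt_mult f g)
  | H : continuity ?F |- continuity_2d_pt (fun u v => ?F (@?p u v)) _ _ =>
      apply (continuity_1d_2d_pt_comp F p); [apply H|]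
  | H : continuity_2d ?G |-
      continuity_2d_pt (fun u v => ?G (@?p u v) (@?q u v)) _ _ =>
      apply (continuity_2d_pt_comp2 G p q); [apply H| |]
  end.

Lemma continuity_const_fun (c : R) : continuity (fun _ => c).
Proof. intros x. repeat continuity_step. Qed.

Lemma ex_RInt_continuity (f : R -> R) a b : continuity f -> ex_RInt f a b.
Proof.
  intros Hf. apply (ex_RInt_continuous (V := R_CompleteNormedModule)).
  intros z _. apply continuity_pt_filterlim, Hf.
Qed.

Lemma is_derive_RInt_upper (f : R -> R) a x :
  continuity f -> is_derive (fun b => RInt f a b) x (f x).
Proof.
  intros Hf. apply (is_derive_RInt (V := R_NormedModule) f _ a).
  - apply filter_forall. intros b.
    apply (RInt_correct (V := R_CompleteNormedModule)), ex_RInt_continuity, Hf.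
  - apply continuity_pt_filterlim, Hf.
Qed.

Lemma RInt_Rminus (f g : R -> R) a b : ex_RInt f a b -> ex_RInt g a b ->
  RInt (fun t => f t - g t) a b = RInt f a b - RInt g a b.
Proof. exact (RInt_minus f g a b). Qed.

Lemma RInt_Rmult_l (f : R -> R) c a b : ex_RInt f a b ->
  RInt (fun t => c * f t) a b = c * RInt f a b.
Proof. exact (RInt_scal f a b c). Qed.

Lemma RInt_comp_shift (f : R -> R) v a b : continuity f ->
  RInt (fun t => f (t + v)) a b = RInt f (a + v) (b + v).
Proof.
  intros Hf.
  assert (E := RInt_comp_lin f 1 v a b (ex_RInt_continuity f _ _ Hf)).
  rewrite !Rmult_1_l in E. rewrite <- E.
  apply RInt_ext. intros t _. unfold scal; simpl; unfold mult; simpl.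
  now rewrite !Rmult_1_l.
Qed.

Lemma RInt_comp_reflect (f : R -> R) x : continuity f ->
  RInt (fun t => f (x - t)) 0 x = RInt f 0 x.
Proof.
  intros Hf.
  assert (E := RInt_comp_lin f (-1) x 0 x (ex_RInt_continuity f _ _ Hf)).
  replace (-1 * 0 + x) with x in E by ring.
  replace (-1 * x + x) with 0 in E by ring.
  rewrite <- (opp_RInt_swap f 0 x) in E by now apply ex_RInt_continuity.
  rewrite (RInt_ext _ (fun t => -1 * f (x - t))) in E.
  2: { intros t _. unfold scal; simpl; unfold mult; simpl.
       now replace (-1 * t + x) with (x - t) by ring. }
  rewrite RInt_Rmult_l in E by (apply ex_RInt_continuity; repeat continuity_step).
  unfold opp in E; simpl in E. lra.
Qed.

Lemma derive_zero_const (T : R -> R) a b :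
  (forall x, is_derive T x 0) -> T b = T a.
Proof.
  intros HT. destruct (MVT_gen T a b (fun _ => 0)) as [c [_ Hc]].
  - intros x _. apply HT.
  - intros x _. apply continuity_pt_filterlim,
      (ex_derive_continuous (K := R_AbsRing) (V := R_NormedModule)).
    eexists. apply HT.
  - lra.
Qed.

Definition extend01 (f : R -> R) (t : R) : R := f (Rmax 0 (Rmin 1 t)).

Lemma extend01_id (f : R -> R) t : 0 <= t <= 1 -> extend01 f t = f t.
Proof. intros Ht. unfold extend01. f_equal. rewrite Rmin_right, Rmax_right; lra. Qed.

Lemma continuity_extend01 (f : R -> R) : cont01 f -> continuity (extend01 f).
Proof.
  intros Hf x. apply continuity_pt_intro. intros eps Heps.
  set (clamp := fun t => Rmax 0 (Rmin 1 t)).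
  assert (Hin : forall t, 0 <= clamp t <= 1).
  { intros t. unfold clamp, Rmax, Rmin. repeat destruct Rle_dec; lra. }
  assert (Hlip : forall t, Rabs (clamp t - clamp x) <= Rabs (t - x)).
  { intros t. unfold clamp, Rmax, Rmin.
    repeat destruct Rle_dec; unfold Rabs; repeat destruct Rcase_abs; lra. }
  destruct (Hf (clamp x) (Hin x) eps Heps) as [d [Hd Hy]].
  exists d. split; [exact Hd|]. intros y Hyx.
  apply Hy; [apply Hin | eapply Rle_lt_trans; [apply Hlip | exact Hyx]].
Qed.

Lemma continuity_RInt_param (g : R -> R -> R) a b : a <= b -> continuity_2d g ->
  continuity (fun x => RInt (g x) a b).
Proof.
  intros Hab Hg x0. apply continuity_pt_intro. intros eps Heps.
  set (eta := eps / (b - a + 1)).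
  assert (Heta : 0 < eta) by (apply Rdiv_lt_0_compat; lra).
  destruct (uniform_continuity_2d g (x0 - 1) (x0 + 1) a b
              (fun x y _ _ => Hg x y) (mkposreal eta Heta)) as [d Hd].
  exists (Rmin d 1). split; [apply Rmin_pos; [apply cond_pos | lra]|].
  intros y Hy.
  assert (Hyd : Rabs (y - x0) < d) by (eapply Rlt_le_trans; [exact Hy | apply Rmin_l]).
  assert (Hy1 : Rabs (y - x0) < 1) by (eapply Rlt_le_trans; [exact Hy | apply Rmin_r]).
  apply Rabs_lt_between' in Hy1.
  rewrite <- RInt_Rminus by (apply ex_RInt_continuity; repeat continuity_step).
  apply Rle_lt_trans with ((b - a) * eta).
  - apply abs_RInt_le_const; [exact Hab | apply ex_RInt_continuity; repeat continuity_step |].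
    intros t Ht. left. apply Hd; try lra.
    rewrite Rminus_eq_0, Rabs_R0. apply cond_pos.
  - replace ((b - a) * eta) with (eps - eta) by (unfold eta; field; lra). lra.
Qed.

Lemma continuity_RInt_param_bounds (g : R -> R -> R) (alpha beta : R -> R) :
  continuity_2d g -> continuity alpha -> continuity beta ->
  continuity (fun x => RInt (g x) (alpha x) (beta x)).
Proof.
  intros Hg Ha Hb.
  (* substitute t = alpha x + (beta x - alpha x) s to fix the bounds *)
  set (h := fun x s =>
         (beta x - alpha x) * g x ((beta x - alpha x) * s + alpha x)).
  assert (E : forall x, RInt (h x) 0 1 = RInt (g x) (alpha x) (beta x)).
  { intros x.
    assert (Hgx : continuity (g x)) by repeat continuity_step.
    assert (E := RInt_comp_lin (g x) (beta x - alpha x) (alpha x) 0 1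
                   (ex_RInt_continuity _ _ _ Hgx)).
    rewrite Rmult_0_r, Rplus_0_l, Rmult_1_r in E.
    replace (beta x - alpha x + alpha x) with (beta x) in E by ring.
    exact E. }
  intros x. apply (continuity_pt_ext (fun x => RInt (h x) 0 1)); [exact E|].
  apply continuity_RInt_param; [lra|]. unfold h. repeat continuity_step.
Qed.

Lemma continuity_conv (a b : R -> R) :
  continuity a -> continuity b -> continuity (conv a b).
Proof.
  intros Ha Hb.
  apply (continuity_RInt_param_bounds (fun x y => a (x - y) * b y)
           (fun _ => 0) (fun x => x)); repeat continuity_step.
Qed.

Ltac solve_continuity :=
  repeat match goal with
  | |- continuity (conv _ _) => apply continuity_conv
  | |- continuity_pt (conv _ _) _ => apply continuity_conv
  | |- continuity_pt (fun t => conv _ _ t) _ => apply continuity_conv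
  | |- _ => continuity_step
  end.

Lemma conv_ext (a a' b b' : R -> R) x : 0 <= x ->
  (forall t, 0 <= t <= x -> a t = a' t) -> (forall t, 0 <= t <= x -> b t = b' t) ->
  conv a b x = conv a' b' x.
Proof.
  intros Hx Ha Hb. unfold conv. apply RInt_ext.
  rewrite Rmin_left, Rmax_right by lra. intros y Hy.
  rewrite Ha, Hb by lra. reflexivity.
Qed.

Lemma conv_extend01 (a b : R -> R) x : 0 <= x <= 1 ->
  conv (extend01 a) (extend01 b) x = conv a b x.
Proof. intros Hx. apply conv_ext; intros; try apply extend01_id; lra. Qed.

Lemma conv_minus_l (a b c : R -> R) x :
  continuity a -> continuity b -> continuity c ->
  conv (fun t => a t - b t) c x = conv a c x - conv b c x.
Proof.
  intros Ha Hb Hc. unfold conv.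
  rewrite <- RInt_Rminus by (apply ex_RInt_continuity; solve_continuity).
  apply RInt_ext. intros t _. simpl. ring.
Qed.

Lemma conv_minus_r (a b c : R -> R) x :
  continuity a -> continuity b -> continuity c ->
  conv c (fun t => a t - b t) x = conv c a x - conv c b x.
Proof.
  intros Ha Hb Hc. unfold conv.
  rewrite <- RInt_Rminus by (apply ex_RInt_continuity; solve_continuity).
  apply RInt_ext. intros t _. simpl. ring.
Qed.

Lemma conv_comm (a b : R -> R) x : continuity a -> continuity b ->
  conv a b x = conv b a x.
Proof.
  intros Ha Hb. unfold conv.
  rewrite <- (RInt_comp_reflect (fun y => b (x - y) * a y)) by solve_continuity.
  apply RInt_ext. intros y _. simpl. replace (x - (x - y)) with y by ring. ring.
Qed.

Lemma conv_const_one (h : R -> R) x : continuity h ->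
  conv h (fun _ => 1) x = RInt h 0 x.
Proof.
  intros Hh. rewrite conv_comm by solve_continuity.
  unfold conv. apply RInt_ext. intros t _. simpl. ring.
Qed.

Lemma is_derive_RInt_param_diag (F f : R -> R -> R) x :
  (forall u, continuity (F u)) -> continuity_2d f ->
  (forall u t, is_derive (fun u => F u t) u (f u t)) ->
  is_derive (fun X => RInt (F X) 0 X) x (RInt (f x) 0 x + F x x).
Proof.
  intros HF Hf dF.
  assert (Hd : forall u t, Derive (fun u => F u t) u = f u t)
    by (intros; apply is_derive_unique, dF).
  assert (Hcd : forall u t,
             continuity_2d_pt (fun u v => Derive (fun z => F z v) u) u t).
  { intros u t. apply (continuity_2d_pt_ext f); [intros; now rewrite Hd | apply Hf]. }
  rewrite (RInt_ext (f x) (fun t => Derive (fun u => F u t) x))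
    by (intros; now rewrite Hd).
  rewrite <- (Rmult_1_r (F x x)).
  apply (is_derive_RInt_param_bound_comp_aux3 F 0 (fun X => X) x 1).
  - apply filter_forall. intros y. apply ex_RInt_continuity, HF.
  - exists (mkposreal 1 Rlt_0_1).
    apply filter_forall. intros y. apply ex_RInt_continuity, HF.
  - apply (is_derive_id (K := R_AbsRing)).
  - exists (mkposreal 1 Rlt_0_1).
    apply filter_forall. intros y t _. eexists. apply dF.
  - intros t _. apply Hcd.
  - exists (mkposreal 1 Rlt_0_1). intros u v _ _. apply Hcd.
  - apply HF.
Qed.

Lemma RInt_triangle_swap (f : R -> R -> R) X : continuity_2d f ->
  RInt (fun y => RInt (f y) 0 y) 0 X =
  RInt (fun z => RInt (fun y => f y z) z X) 0 X.
Proof.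
  intros Hf.
  (* both sides vanish at X = 0 and have the same derivative in X *)
  set (Phi := fun u z => RInt (fun y => f y z) z u).
  assert (HPhi : forall u, continuity (Phi u)).
  { intros u. apply (continuity_RInt_param_bounds (fun z y => f y z));
      solve_continuity. }
  assert (dPhi : forall u z, is_derive (fun u => Phi u z) u (f u z)).
  { intros u z. apply (is_derive_RInt_upper (fun y => f y z)). solve_continuity. }
  assert (HT : forall x, is_derive
            (fun X => RInt (fun y => RInt (f y) 0 y) 0 X - RInt (Phi X) 0 X) x 0).
  { intros x.
    assert (D1 : is_derive (fun X => RInt (fun y => RInt (f y) 0 y) 0 X) x
                           (RInt (f x) 0 x)).
    { apply (is_derive_RInt_upper (fun y => RInt (f y) 0 y)).
      apply (continuity_RInt_param_bounds f (fun _ => 0) (fun y => y));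
        solve_continuity. }
    assert (D2 := is_derive_RInt_param_diag Phi f x HPhi Hf dPhi).
    assert (Phi_diag : Phi x x = 0) by exact (RInt_point x (fun y => f y x)).
    rewrite Phi_diag, Rplus_0_r in D2.
    assert (D := is_derive_minus _ _ _ _ _ D1 D2).
    unfold minus, plus, opp in D; simpl in D. now rewrite Rplus_opp_r in D. }
  assert (E := derive_zero_const _ 0 X HT).
  cbv beta in E. rewrite !RInt_point in E. unfold zero in E; simpl in E.
  unfold Phi in E. cbv beta in E. lra.
Qed.

Lemma conv_assoc (a b c : R -> R) x :
  continuity a -> continuity b -> continuity c ->
  conv (conv a b) c x = conv a (conv b c) x.
Proof.
  intros Ha Hb Hc. symmetry.
  transitivity (RInt (fun y => RInt (fun z => a (x - y) * (b (y - z) * c z)) 0 y) 0 x).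
  { unfold conv. apply RInt_ext. intros y _.
    rewrite RInt_Rmult_l; [reflexivity|]. apply ex_RInt_continuity; solve_continuity. }
  rewrite (RInt_triangle_swap (fun y z => a (x - y) * (b (y - z) * c z)))
    by solve_continuity.
  change (conv (conv a b) c x) with (RInt (fun z => conv a b (x - z) * c z) 0 x).
  apply RInt_ext. intros z _.
  rewrite (RInt_ext _ (fun y => c z * (a (x - y) * b (y - z))))
    by (intros; simpl; ring).
  rewrite RInt_Rmult_l by (apply ex_RInt_continuity; solve_continuity).
  rewrite Rmult_comm. f_equal.
  assert (E := RInt_comp_shift (fun y => a (x - y) * b (y - z)) z 0 (x - z)).
  rewrite Rplus_0_l in E. replace (x - z + z) with x in E by ring.
  rewrite <- E by solve_continuity.
  unfold conv. apply RInt_ext. intros t _.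
  replace (x - (t + z)) with (x - z - t) by ring.
  replace (t + z - z) with t by ring. reflexivity.
Qed.

Lemma is_derive_eq0_of_const01 (F : R -> R) l x : 0 <= x <= 1 ->
  (forall y, 0 <= y <= 1 -> F y = F x) -> is_derive F x l -> l = 0.
Proof.
  intros Hx HF HD. apply is_derive_Reals in HD.
  (* a difference quotient with x + h still in [0, 1] is 0 *)
  destruct (Req_dec l 0) as [|Hl]; [assumption | exfalso].
  destruct (HD (Rabs l) (Rabs_pos_lt _ Hl)) as [d Hd].
  set (m := Rmin (d / 2) (1 / 2)).
  assert (Hm : 0 < m <= 1 / 2 /\ m < d).
  { assert (0 < d) by apply cond_pos.
    unfold m. split; [split|]; [apply Rmin_pos | apply Rmin_r |
      eapply Rle_lt_trans; [apply Rmin_l|]]; lra. }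
  assert (exists h, h <> 0 /\ Rabs h < d /\ 0 <= x + h <= 1)
    as [h [Hh0 [Hhd Hxh]]].
  { destruct (Rle_dec x (1 / 2)); [exists m | exists (- m)];
      rewrite ?Rabs_Ropp, Rabs_pos_eq; lra. }
  specialize (Hd h Hh0 Hhd). rewrite (HF (x + h) Hxh) in Hd.
  rewrite Rminus_eq_0, Rdiv_0_l, Rminus_0_l, Rabs_Ropp in Hd.
  lra.
Qed.

Lemma RInt_eq0_on01 (h : R -> R) : continuity h ->
  (forall x, 0 <= x <= 1 -> RInt h 0 x = 0) -> forall x, 0 <= x <= 1 -> h x = 0.
Proof.
  intros Hh H0 x Hx.
  apply (is_derive_eq0_of_const01 (fun b => RInt h 0 b) _ x Hx).
  - intros y Hy. now rewrite !H0.
  - now apply is_derive_RInt_upper.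
Qed.

Lemma gronwall (u : R -> R) A c x : continuity u -> 0 <= c -> 0 <= x ->
  (forall t, 0 <= t <= x -> u t <= A + c * RInt u 0 t) ->
  u x <= A * exp (c * x).
Proof.
  intros Hu Hc Hx Hle.
  set (Psi := fun t => exp (- (c * t)) * (A + c * RInt u 0 t)).
  assert (dPsi : forall t, is_derive Psi t
            (c * exp (- (c * t)) * (u t - (A + c * RInt u 0 t)))).
  { intros t. unfold Psi. auto_derive.
    - split; [apply ex_RInt_continuity, Hu|].
      split; [|exact I]. apply filter_forall. intros. apply Hu.
    - change (RInt (fun y => u y) 0 t) with (RInt u 0 t). ring. }
  destruct (MVT_gen Psi 0 x _ (fun t _ => dPsi t)) as [xi [Hxi E]].
  { intros t _. apply continuity_pt_filterlim,
      (ex_derive_continuous (K := R_AbsRing) (V := R_NormedModule)).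
    eexists. apply dPsi. }
  rewrite Rmin_left, Rmax_right in Hxi by lra.
  assert (Hdecr : Psi x <= Psi 0).
  { specialize (Hle xi Hxi).
    assert (0 <= c * exp (- (c * xi)) * (A + c * RInt u 0 xi - u xi)).
    { apply Rmult_le_pos; [apply Rmult_le_pos; [lra | apply Rlt_le, exp_pos] | lra]. }
    nra. }
  unfold Psi in Hdecr. rewrite RInt_point, Rmult_0_r, Ropp_0, exp_0 in Hdecr.
  unfold zero in Hdecr; simpl in Hdecr. rewrite Rmult_0_r, Rplus_0_r, Rmult_1_l in Hdecr.
  apply Rmult_le_compat_l with (r := exp (c * x)) in Hdecr; [|apply Rlt_le, exp_pos].
  rewrite <- Rmult_assoc, <- exp_plus, Rplus_opp_r, exp_0, Rmult_1_l in Hdecr.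
  specialize (Hle x (conj Hx (Rle_refl x))). lra.
Qed.

Lemma abs_conv_le (a b : R -> R) M x : 0 <= x -> continuity a -> continuity b ->
  (forall t, 0 <= t <= x -> Rabs (a t) <= M) ->
  Rabs (conv a b x) <= M * RInt (fun t => Rabs (b t)) 0 x.
Proof.
  intros Hx Ha Hb HM. unfold conv.
  eapply Rle_trans.
  { apply abs_RInt_le; [exact Hx | apply ex_RInt_continuity; solve_continuity]. }
  rewrite <- RInt_Rmult_l by (apply ex_RInt_continuity; solve_continuity).
  apply RInt_le; [exact Hx | apply ex_RInt_continuity; solve_continuity .. |].
  intros t Ht. rewrite Rabs_mult.
  apply Rmult_le_compat_r; [apply Rabs_pos | apply HM; lra].
Qed.

Lemma abs_conv_le_const (a b : R -> R) M N x : 0 <= x -> continuity a -> continuity b ->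
  (forall t, 0 <= t <= x -> Rabs (a t) <= M) ->
  (forall t, 0 <= t <= x -> Rabs (b t) <= N) ->
  Rabs (conv a b x) <= x * (M * N).
Proof.
  intros Hx Ha Hb HM HN. unfold conv. rewrite <- (Rminus_0_r x) at 2.
  apply abs_RInt_le_const; [exact Hx | apply ex_RInt_continuity; solve_continuity |].
  intros t Ht. rewrite Rabs_mult.
  apply Rmult_le_compat; try apply Rabs_pos; [apply HM | apply HN]; lra.
Qed.

Lemma inverse_kernel_resolvent (kh lh : R -> R) :
  cont01 kh -> is_inverse_kernel kh lh ->
  forall x, 0 <= x <= 1 -> lh x = kh x + conv lh kh x.
Proof.
  intros Hkh [Hlh Hinv].
  set (Kh := extend01 kh). set (L := extend01 lh). set (one := fun _ : R => 1).
  assert (HKh : continuity Kh) by now apply continuity_extend01.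
  assert (HL : continuity L) by now apply continuity_extend01.
  assert (Hone : continuity one) by apply continuity_const_fun.
  assert (Hone01 : cont01 one).
  { intros ? ? e He. exists 1. split; [lra|]. intros. unfold one.
    rewrite Rminus_eq_0, Rabs_R0. exact He. }
  assert (HKh1 : forall t, 0 <= t <= 1 -> conv kh one t = conv Kh one t).
  { intros t Ht. apply conv_ext; intros; [lra | | reflexivity].
    symmetry. apply extend01_id. lra. }
  (* the inverse property for u = 1, i.e. (L - Kh - L * Kh) * 1 = 0 *)
  assert (Hinv1 : forall x, 0 <= x <= 1 ->
            conv Kh one x = conv L one x - conv (conv L Kh) one x).
  { intros x Hx. specialize (Hinv one Hone01 x Hx). cbv zeta in Hinv.
    rewrite (conv_ext lh L _ (fun t => one t - conv Kh one t)) in Hinv.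
    - rewrite conv_minus_r, <- conv_assoc in Hinv by solve_continuity.
      rewrite HKh1 in Hinv by lra. lra.
    - lra.
    - intros t Ht. symmetry. apply extend01_id. lra.
    - intros t Ht. rewrite HKh1 by lra. reflexivity. }
  assert (Hzero : forall x, 0 <= x <= 1 -> L x - Kh x - conv L Kh x = 0).
  { apply RInt_eq0_on01; [solve_continuity|]. intros x Hx.
    rewrite <- conv_const_one, !conv_minus_l by solve_continuity.
    specialize (Hinv1 x Hx). unfold one in Hinv1. lra. }
  intros x Hx. specialize (Hzero x Hx).
  unfold L, Kh in Hzero. rewrite !extend01_id, conv_extend01 in Hzero by lra.
  lra.
Qed.

Section ResolventBound.

Variables B K Kh L : R -> R.
Hypotheses (HB : continuity B) (HK : continuity K) (HKh : continuity Kh)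
  (HL : continuity L).
Hypothesis kernel_eq : forall x, 0 <= x <= 1 -> K x = - B x + conv B K x.
Hypothesis resolvent_eq : forall x, 0 <= x <= 1 -> L x = Kh x + conv L Kh x.

Let D t := K t - Kh t.
Let G t := D t - conv B D t.

Lemma resolvent_representation x : 0 <= x <= 1 ->
  L x = - B x - G x - conv G L x.
Proof.
  intros Hx.
  assert (HD : continuity D) by (unfold D; solve_continuity).
  assert (HDL : forall t, 0 <= t <= 1 -> conv D L t = conv K L t - (L t - Kh t)).
  { intros t Ht. unfold D.
    rewrite conv_minus_l, (conv_comm Kh L) by solve_continuity.
    rewrite (resolvent_eq t Ht). ring. }
  assert (HGL : conv G L x = conv D L x - conv B (conv D L) x).
  { unfold G. rewrite conv_minus_l, conv_assoc by solve_continuity. reflexivity. }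
  assert (HBDL : conv B (conv D L) x = conv B (conv K L) x - (conv B L x - conv B Kh x)).
  { rewrite (conv_ext B B (conv D L) (fun t => conv K L t - (L t - Kh t)));
      [| lra | reflexivity | intros; apply HDL; lra].
    rewrite !conv_minus_r by solve_continuity. reflexivity. }
  assert (HKL : conv K L x = conv B (conv K L) x - conv B L x).
  { rewrite (conv_ext K (fun t => conv B K t - B t) L L);
      [| lra | intros t Ht; rewrite (kernel_eq t) by lra; ring | reflexivity].
    rewrite conv_minus_l, conv_assoc by solve_continuity. reflexivity. }
  assert (HBD : conv B D x = conv B K x - conv B Kh x)
    by (unfold D; apply conv_minus_r; assumption).
  assert (Hk := kernel_eq x Hx).
  rewrite HGL, HBDL, (HDL x Hx). unfold G, D in *. lra.
Qed.

Variables bb eps : R.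
Hypothesis B_bound : forall x, 0 <= x <= 1 -> Rabs (B x) <= bb.
Hypothesis error_bound : forall x, 0 <= x <= 1 -> Rabs (K x - Kh x) <= eps.

Lemma abs_G_le x : 0 <= x <= 1 -> Rabs (G x) <= (1 + bb) * eps.
Proof.
  intros Hx.
  assert (Hbb : 0 <= bb) by (eapply Rle_trans; [apply Rabs_pos | apply (B_bound 0); lra]).
  assert (Heps : 0 <= eps)
    by (eapply Rle_trans; [apply Rabs_pos | apply (error_bound 0); lra]).
  assert (HBD : Rabs (conv B D x) <= x * (bb * eps)).
  { apply abs_conv_le_const; try (unfold D; solve_continuity); try lra;
      intros; [apply B_bound | apply error_bound]; lra. }
  assert (Hx_bb_eps : x * (bb * eps) <= bb * eps).
  { assert (0 <= bb * eps) by (apply Rmult_le_pos; lra). nra. }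
  specialize (error_bound x Hx). unfold G, D in *.
  apply Rabs_le_between in HBD. apply Rabs_le_between in error_bound.
  apply Rabs_le_between. lra.
Qed.

Lemma resolvent_bound x : 0 <= x <= 1 ->
  Rabs (L x) <= (bb + (1 + bb) * eps) * exp ((1 + bb) * eps * x).
Proof.
  intros Hx.
  assert (HG : continuity G) by (unfold G, D; solve_continuity).
  assert (Hc : 0 <= (1 + bb) * eps).
  { eapply Rle_trans; [apply Rabs_pos | apply (abs_G_le 0); lra]. }
  apply (gronwall (fun t => Rabs (L t))); [solve_continuity | exact Hc | lra |].
  intros t Ht.
  assert (HGL := abs_conv_le G L ((1 + bb) * eps) t ltac:(lra) HG HL
                   ltac:(intros; apply abs_G_le; lra)).
  assert (HBt := B_bound t ltac:(lra)). assert (HGt := abs_G_le t ltac:(lra)).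
  rewrite (resolvent_representation t) by lra.
  apply Rabs_le_between in HGL. apply Rabs_le_between in HBt.
  apply Rabs_le_between in HGt. apply Rabs_le_between. lra.
Qed.

End ResolventBound.

Theorem lemma3 (beta k kh lh : R -> R) (bb eps : R) :
  cont01 beta ->
  is_supnorm01 beta bb ->
  is_kernel_of beta k ->
  cont01 kh ->
  (forall x, 0 <= x <= 1 -> Rabs (k x - kh x) < eps) ->
  is_inverse_kernel kh lh ->
  forall x, 0 <= x <= 1 ->
    Rabs (lh x) <= (bb + (1 + bb) * eps) * exp ((1 + bb) * eps * x).
Proof.
  intros Hbeta [Hsup _] [Hk Hkeq] Hkh Hclose Hinv x Hx.
  assert (Hres := inverse_kernel_resolvent kh lh Hkh Hinv).
  destruct Hinv as [Hlh _].
  rewrite <- (extend01_id lh x Hx).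
  apply (resolvent_bound (extend01 beta) (extend01 k) (extend01 kh));
    try (apply continuity_extend01; assumption); try exact Hx;
    intros t Ht; rewrite ?conv_extend01, !extend01_id by exact Ht.
  - apply Hkeq, Ht.
  - apply Hres, Ht.
  - apply Hsup, Ht.
  - apply Rlt_le, Hclose, Ht.
Qed.
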